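(* Let $c>0$. A countable collection of languages $\mathcal{L}$ is generable in the limit with set-based lower density $c$ under finite noise and finite omissions (i.e., there is a set-based generator which, for every $K\in\mathcal{L}$ and every enumeration of $K$ with finite noise and finite omissions, outputs sets $A_n$ with $A_n\subseteq K$ for all sufficiently large $n$ and $\liminf_{n}\mu_{\rm low}(A_n,K)\ge c$) if and only if for all $L,L'\in\mathcal{L}$ with $|L\setminus L'|<\infty$ it holds that $\mu_{\rm low}(L,L')\ge c$.
   Context: The universe is $U=\mathbb{N}$ with its natural order. A language is an infinite subset of $U$; a collection is a countable family of languages. For $A,B\subseteq\mathbb{N}$ with $B=\{b_1<b_2<\cdots\}$, $\mu_{\rm low}(A,B)=\liminf_n\frac1n|A\cap\{b_1,\dots,b_n\}|$. An enumeration is a sequence of distinct elements of $U$; $S_n=\{x_1,\dots,x_n\}$. An enumeration of $K$ with finite noise and finite omissions is a sequence in which every element of some $\hat K\subseteq K$ with $|K\setminus\hat K|<\infty$ appears exactly once and only finitely many elements outside $\hat K$ appear. A set-based generator is a sequence of maps that, given $x_1,\dots,x_n$ (and knowledge of $\mathcal{L}$, not of $K$), outputs $A_n\subseteq U\setminus S_n$. *)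

From HB Require Import structures.
From mathcomp Require Import all_boot all_order all_algebra.
From mathcomp Require Import boolp classical_sets functions cardinality reals ereal sequences.
Set Implicit Arguments. Unset Strict Implicit. Unset Printing Implicit Defensive.
Import Order.TTheory GRing.Theory Num.Theory.
Local Open Scope classical_set_scope.
Local Open Scope ring_scope.

Definition next_in (B : set nat) (m : nat) : nat :=
  xget 0%N [set x | B x /\ (m <= x)%N /\ forall y, B y -> (m <= y)%N -> (x <= y)%N].

(* Increasing enumeration of B: elem_of B 0 = b_1, elem_of B 1 = b_2, ... *)
Fixpoint elem_of (B : set nat) (k : nat) : nat :=
  match k with
  | 0 => next_in B 0
  | k'.+1 => next_in B (elem_of B k').+1
  end.

(* |A ∩ {b_1,...,b_n}| (the b_i are distinct for an infinite B). *)
Definition cnt_first (A B : set nat) (n : nat) : nat :=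
  \sum_(i < n) ((elem_of B i) \in A : nat).

(* mu_low(A,B) = liminf_n (1/n) |A ∩ {b_1..b_n}|, n >= 1, in the extended reals *)
Definition mu_low {R : realType} (A B : set nat) : \bar R :=
  limn_einf (fun n : nat => ((cnt_first A B n.+1)%:R / (n.+1)%:R : R)%:E).

Definition noisy_enum (K : set nat) (x : nat -> nat) : Prop :=
  injective x /\
  exists Khat : set nat, Khat `<=` K /\ finite_set (K `\` Khat) /\
    (forall y, Khat y -> exists i, x i = y) /\
    finite_set [set y | (exists i, x i = y) /\ ~ Khat y].

Definition prefix (x : nat -> nat) (n : nat) : seq nat := [seq x i | i <- iota 0 n].

(* a set-based generator: maps the observed prefix to A_n ⊆ U \ S_n *)
Definition set_generator (G : seq nat -> set nat) : Prop :=
  forall s : seq nat, forall y, G s y -> y \notin s.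

Definition generable_low_density_noisy (R : realType) (c : R)
    (Lc : set (set nat)) : Prop :=
  exists G : seq nat -> set nat, set_generator G /\
    forall K, Lc K -> forall x, noisy_enum K x ->
      (exists N, forall n, (N <= n)%N -> G (prefix x n) `<=` K) /\
      (c%:E <= limn_einf (fun n : nat => @mu_low R (G (prefix x n.+1)) K))%E.

From Pilot Require Import Defs.
From HB Require Import structures.
From mathcomp Require Import all_boot all_order all_algebra.
From mathcomp Require Import boolp classical_sets functions cardinality reals ereal sequences.
From mathcomp Require Import lra.
Import Order.TTheory GRing.Theory Num.Theory.
Local Open Scope classical_set_scope.

Set Implicit Arguments. Unset Strict Implicit. Unset Printing Implicit Defensive.

(* Against a generator [G] and languages [L], [L'] with
   [L \ L'] finite, an adversary enumerates [L'] in rounds: it appends the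
   least element of [L'] not yet shown, then continues with the rest of
   [L ∩ L'] in increasing order.  That continuation is an enumeration of [L]
   with finite noise and finite omissions, so [G] eventually outputs subsets
   of [L], and the round ends there.  The limit sequence enumerates [L']
   exactly, yet infinitely often [A_n ⊆ L], so that
   [liminf_n mu_low(A_n, L') <= mu_low(L, L')].

   Enumerate the collection as [f], and let index [j] guess the
   language [f (logn 2 j.+1)] restricted to [[j, oo)]: every language is
   guessed by arbitrarily large indices, and large indices do not see finite
   noise or omissions.  The generator outputs the guess of the largest index
   [p <= n] that is consistent with the sample and whose guess is contained
   in the guess of every smaller consistent index.  Once an index [z] guessing
   [K] above all noise and omissions is passed and consistency below [z] has
   settled, [z] qualifies; hence the output lies inside the guess of [z],
   hence inside [K], and the guessed language [L] has [L \ K] finite, so the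
   hypothesis bounds the density from below by [c]. *)

Lemma bounded_nat_finite (F : set nat) m : (forall y, F y -> y < m) -> finite_set F.
Proof. by move=> Fm; apply: (@sub_finite_set _ _ `I_m); [move=> y /Fm | exact: finite_II]. Qed.

Lemma finite_nat_bounded (F : set nat) : finite_set F -> exists m, forall y, F y -> y < m.
Proof.
move=> /finite_seqP[s ->]; exists (\max_(y <- s) y).+1 => y /= ys.
by rewrite ltnS; apply: leq_bigmax_seq.
Qed.

Lemma infinite_nat_unbounded (B : set nat) :
  infinite_set B -> forall m, exists y, B y /\ m <= y.
Proof.
move=> infB m; apply: contrapT => noB; apply: infB.
apply: (@bounded_nat_finite _ m) => y By; rewrite ltnNge.
by apply/negP => my; apply: noB; exists y.
Qed.

Lemma bigmax_lt_notin (s : seq nat) y : \max_(z <- s) z < y -> y \notin s.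
Proof.
move=> sy; apply/negP => ys.
by have := @leq_bigmax_seq nat s xpredT (fun z => z) y ys isT; rewrite leqNgt sy.
Qed.

Lemma infinite_setI_finite_setD T (A B : set T) :
  infinite_set A -> finite_set (A `\` B) -> infinite_set (A `&` B).
Proof.
move=> infA finAB finAIB; apply: infA.
apply: (@sub_finite_set _ _ ((A `&` B) `|` (A `\` B))); last by rewrite finite_setU.
by move=> y Ay; case: (pselect (B y)) => By; [left|right].
Qed.

Lemma countable_enumeration (T : choiceType) (A : set T) (a : T) :
  countable A -> A a -> exists f : nat -> T, (forall i, A (f i)) /\ A `<=` range f.
Proof.
move=> /countable_injP[g ginj] Aa.
pose f n := xget a [set t | A t /\ g t = n]; exists f; split.
  move=> i; rewrite /f; case: (pselect (exists t, A t /\ g t = i)) => [ex|noex].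
    by have [] := xgetPex a ex.
  by rewrite xgetPN // => t [At gt]; apply: noex; exists t.
move=> t At; exists (g t) => //.
have [At' gt] : [set u | A u /\ g u = g t] (f (g t)) by apply: xgetPex; exists t.
by apply: ginj gt; rewrite inE.
Qed.

Lemma antitone_stabilizes (P : nat -> nat -> Prop) :
  (forall n n' q, n <= n' -> P n' q -> P n q) ->
  forall m, exists n1, forall n, n1 <= n -> forall q, q < m -> P n q -> forall n', P n' q.
Proof.
move=> P_anti; elim=> [|m [n1 stable]]; first by exists 0.
have [Pm|] := pselect (forall n', P n' m).
  exists n1 => n n1n q; rewrite ltnS leq_eqVlt => /orP[/eqP -> _ //|]; exact: stable.
move=> /existsNP[n0 nPm]; exists (maxn n1 n0) => n; rewrite geq_max => /andP[n1n n0n] q.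
rewrite ltnS leq_eqVlt => /orP[/eqP -> /(P_anti _ _ _ n0n) //|qm]; exact: stable.
Qed.

Section IncreasingEnumeration.
Variable B : set nat.
Hypothesis infB : infinite_set B.

Lemma next_inP m : B (next_in B m) /\ m <= next_in B m /\
  forall y, B y -> m <= y -> next_in B m <= y.
Proof.
rewrite /next_in; set P := [set x | _]; apply: (@xgetPex _ 0 P).
have [y [By my]] := infinite_nat_unbounded infB m.
have ex : exists n, `[< B n /\ m <= n >] by exists y; apply/asboolP.
case: (ex_minnP ex) => n /asboolP[Bn mn] nmin; exists n; do !split => //.
by move=> z Bz mz; apply: nmin; apply/asboolP.
Qed.

Lemma elem_of_in i : B (elem_of B i).
Proof. by case: i => [|i]; apply: (proj1 (next_inP _)). Qed.

Lemma elem_of_ltS i : elem_of B i < elem_of B i.+1.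
Proof. by case: (next_inP (elem_of B i).+1) => _ []. Qed.

Lemma elem_of_lt : {homo elem_of B : i j / i < j}.
Proof. exact: (@homo_ltn _ _ (fun a b => a < b) ltn_trans elem_of_ltS). Qed.

Lemma elem_of_inj : injective (elem_of B).
Proof.
move=> i j eij; apply/eqP; apply: contraT.
by rewrite neq_ltn => /orP[]/elem_of_lt; rewrite eij ltnn.
Qed.

Lemma elem_of_ge i : i <= elem_of B i.
Proof. by elim: i => // i IH; apply: leq_ltn_trans IH (elem_of_ltS i). Qed.

Lemma elem_of_surj b : B b -> exists i, elem_of B i = b.
Proof.
move=> Bb; suff : forall i, b <= elem_of B i -> exists j, elem_of B j = b.
  by apply; exact: elem_of_ge.
elim=> [|i IH] bi.
  exists 0; apply/eqP; rewrite eqn_leq bi andbT.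
  by case: (next_inP 0) => _ [_]; apply.
have [/IH //|ib] := leqP b (elem_of B i).
exists i.+1; apply/eqP; rewrite eqn_leq bi andbT.
by case: (next_inP (elem_of B i).+1) => _ [_]; apply.
Qed.

End IncreasingEnumeration.

Lemma sum_ord_ltn n m : \sum_(i < n) (i < m : nat) = minn n m.
Proof.
elim: n => [|n IH]; first by rewrite big_ord0 min0n.
rewrite big_ord_recr /= IH; have [nm|mn] := ltnP n m.
  by rewrite (minn_idPl nm) addn1.
by rewrite (minn_idPr (leqW mn)) addn0.
Qed.

Lemma cnt_first_le_eventually (A A' B : set nat) m n : infinite_set B ->
  (forall y, m <= y -> A y -> A' y) -> cnt_first A B n <= cnt_first A' B n + m.
Proof.
move=> infB AA'; rewrite /cnt_first.
apply: (@leq_trans (\sum_(i < n) ((elem_of B i \in A' : nat) + (i < m : nat)))).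
  apply: leq_sum => i _; have [/set_mem Ai|] := boolP (elem_of B i \in A) => //.
  have [mi|im] := leqP m (elem_of B i); first by rewrite (mem_set (AA' _ mi Ai)).
  by rewrite (leq_ltn_trans (elem_of_ge infB i) im) addn1.
by rewrite big_split /= leq_add2l sum_ord_ltn geq_minr.
Qed.

Section Liminf.
Variable R : realType.
Local Open Scope ereal_scope.
Implicit Types u v : (\bar R)^nat.

Lemma limn_einf_supE u : limn_einf u = ereal_sup (range (einfs u)).
Proof. by rewrite limn_einf_lim; apply/cvg_lim => //; exact: cvg_einfs_sup. Qed.

Lemma limn_einf_ge_eventually u a : (exists N, forall n, (N <= n)%N -> a <= u n) ->
  a <= limn_einf u.
Proof.
move=> [N Nu]; rewrite limn_einf_supE.
apply: (@le_trans _ _ (einfs u N)); last by apply: ereal_sup_ubound; exists N.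
by apply: le_ereal_inf_tmp => _ [n /= Nn <-]; exact: Nu.
Qed.

Lemma limn_einf_le_often u b : (forall N, exists2 n, (N <= n)%N & u n <= b) ->
  limn_einf u <= b.
Proof.
move=> often; rewrite limn_einf_supE; apply: ge_ereal_sup => _ [N _ <-].
have [n Nn unb] := often N; apply: le_trans unb.
by apply: ereal_inf_lbound; exists n.
Qed.

Lemma limn_einf_le_eventually u v : (exists N, forall n, (N <= n)%N -> u n <= v n) ->
  limn_einf u <= limn_einf v.
Proof.
move=> [N uv]; rewrite !limn_einf_supE; apply: ge_ereal_sup => _ [M _ <-].
apply: (@le_trans _ _ (einfs u (maxn M N))).
  by apply: nondecreasing_einfs; exact: leq_maxl.
apply: (@le_trans _ _ (einfs v (maxn M N))).
  apply: le_ereal_inf_tmp => _ [n /= Mn <-].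
  apply: le_trans (uv n _); last by rewrite geq_max in Mn; case/andP: Mn.
  by apply: ereal_inf_lbound; exists n.
by apply: ereal_sup_ubound; exists (maxn M N).
Qed.

End Liminf.

Section MuLow.
Local Open Scope ring_scope.

Lemma mu_low_le_eventually (R : realType) (A A' B : set nat) m : infinite_set B ->
  (forall y, (m <= y)%N -> A y -> A' y) -> (@mu_low R A B <= @mu_low R A' B)%E.
Proof.
move=> infB AA'; apply/lee_addgt0Pr => e e0.
rewrite /mu_low addeC -limn_einf_shift //; apply: limn_einf_le_eventually.
have e0' : 0 <= m%:R / e by rewrite divr_ge0 // ltW.
exists (Num.Def.archi_bound (m%:R / e)) => n Nn; rewrite lee_fin.
have cntAA' : (cnt_first A B n.+1)%:R <= (cnt_first A' B n.+1)%:R + m%:R :> R.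
  by rewrite -natrD ler_nat cnt_first_le_eventually.
have me : m%:R <= e * n.+1%:R.
  rewrite mulrC -ler_pdivrMr //; apply: ltW.
  by apply: lt_le_trans (archi_boundP e0') _; rewrite ler_nat; exact: leqW.
have n0 : 0 < n.+1%:R :> R by rewrite ltr0n.
rewrite ler_pdivrMr // mulrDl divfK ?gt_eqF //; lra.
Qed.

End MuLow.

(* [seq.prefix] shadows [Defs.prefix]. *)
Local Notation sample := Defs.prefix.

Lemma size_sample x n : size (sample x n) = n.
Proof. by rewrite size_map size_iota. Qed.

Lemma nth_sample x n i : i < n -> nth 0 (sample x n) i = x i.
Proof. by move=> i_n; rewrite (nth_map 0) ?size_iota // nth_iota. Qed.

Lemma mem_sample x n i : i < n -> x i \in sample x n.
Proof. by move=> i_n; apply/mapP; exists i; rewrite // mem_iota. Qed.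

Lemma take_sample x n m : m <= n -> take m (sample x n) = sample x m.
Proof. by move=> mn; rewrite -map_take take_iota (minn_idPl mn). Qed.

Lemma sample_subset x m n : m <= n -> {subset sample x m <= sample x n}.
Proof. by move=> mn y; rewrite -(take_sample x mn) => /mem_take. Qed.

Lemma sample_seq (s : seq nat) x : (forall i, i < size s -> x i = nth 0 s i) ->
  sample x (size s) = s.
Proof.
move=> xs; apply: (@eq_from_nth _ 0); rewrite size_sample // => i i_s.
by rewrite nth_sample // xs.
Qed.

Section Adversary.
Variables (G : seq nat -> set nat) (L L' : set nat).
Hypotheses (infL : infinite_set L) (infL' : infinite_set L').
Hypothesis finLL' : finite_set (L `\` L').
Hypothesis G_sub_L : forall x, noisy_enum L x ->
  exists N, forall n, N <= n -> G (sample x n) `<=` L.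

Definition least_missing (s : seq nat) := next_in (L' `\` [set` s]) 0.

Lemma least_missingP s : [/\ L' (least_missing s), least_missing s \notin s &
  forall y, L' y -> y \notin s -> least_missing s <= y].
Proof.
have [[L'm ms] [_ mmin]] := next_inP (infinite_setD infL' (finite_seq s)) 0.
split => //; first exact/negP.
by move=> y L'y /negP ys; apply: mmin.
Qed.

Definition rest (s : seq nat) := (L `&` L') `\` [set` s].

Lemma infinite_rest s : infinite_set (rest s).
Proof. exact: infinite_setD (infinite_setI_finite_setD infL finLL') (finite_seq s). Qed.
Arguments infinite_rest : clear implicits.

Definition pad (s : seq nat) i :=
  if i < size s then nth 0 s i else elem_of (rest s) (i - size s).

Lemma pad_cases s i : pad s i \in s \/ rest s (pad s i).
Proof.
rewrite /pad; case: ltnP => i_s; first by left; rewrite mem_nth.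
by right; exact: elem_of_in (infinite_rest s) _.
Qed.

Lemma sample_pad s : sample (pad s) (size s) = s.
Proof. by apply: sample_seq => i i_s; rewrite /pad i_s. Qed.

Lemma pad_inj s : uniq s -> injective (pad s).
Proof.
move=> us i j; rewrite /pad.
have rest_notin k : elem_of (rest s) k \notin s.
  by have [_ /negP] := elem_of_in (infinite_rest s) k.
case: (ltnP i (size s)) => i_s; case: (ltnP j (size s)) => j_s.
- by move=> /eqP; rewrite nth_uniq // => /eqP.
- by move=> e; have := rest_notin (j - size s); rewrite -e mem_nth.
- by move=> e; have := rest_notin (i - size s); rewrite e mem_nth.
- by move=> /(elem_of_inj (infinite_rest s)) e; rewrite -(subnK i_s) -(subnK j_s) e.
Qed.

(* Omissions lie in [L `\` L'] or in [s]; noise lies in [s]. *)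
Lemma pad_noisy s : uniq s -> noisy_enum L (pad s).
Proof.
move=> us; split; first exact: pad_inj.
exists (rest s); split; first by move=> y [[]].
split.
  apply: (@sub_finite_set _ _ ((L `\` L') `|` [set` s])).
    move=> y [Ly not_rest]; have [L'y|] := pselect (L' y); [right|by left].
    by apply: contrapT => ys; apply: not_rest.
  by rewrite finite_setU; split => //; exact: finite_seq.
split.
  move=> y /(elem_of_surj (infinite_rest s))[i <-].
  by exists (size s + i); rewrite /pad ltnNge leq_addr /= addKn.
apply: (@sub_finite_set _ _ [set` s]); last exact: finite_seq.
by move=> y [[i <-] not_rest]; case: (pad_cases s i).
Qed.

Definition extension_length (s : seq nat) :=
  xget 0 [set n | size s <= n /\ G (sample (pad s) n) `<=` L].

Lemma extension_lengthP s : uniq s ->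
  size s <= extension_length s /\ G (sample (pad s) (extension_length s)) `<=` L.
Proof.
move=> us; rewrite /extension_length; set P := [set n | _].
apply: (@xgetPex _ 0 P); have [N GN] := G_sub_L (pad_noisy us).
by exists (maxn N (size s)); split; [exact: leq_maxr | apply: GN; exact: leq_maxl].
Qed.

Definition extend (s : seq nat) :=
  let s' := rcons s (least_missing s) in sample (pad s') (extension_length s').

Section Extend.
Variable s : seq nat.
Hypothesis us : uniq s.
Let s' := rcons s (least_missing s).

Let us' : uniq s'.
Proof. by rewrite rcons_uniq us andbT; case: (least_missingP s). Qed.

Let take_extend_rcons : take (size s') (extend s) = s'.
Proof. by rewrite take_sample ?(proj1 (extension_lengthP us')) // sample_pad. Qed.

Lemma take_extend : take (size s) (extend s) = s.
Proof.
have ss' : size s <= size s' by rewrite size_rcons.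
by rewrite -(take_takel _ ss') take_extend_rcons /s' -cats1 take_size_cat.
Qed.

Lemma size_extend : size s < size (extend s).
Proof.
rewrite size_sample -(size_rcons s (least_missing s)).
by case: (extension_lengthP us').
Qed.

Lemma uniq_extend : uniq (extend s).
Proof. by rewrite /extend /Defs.prefix map_inj_uniq ?iota_uniq //; exact: pad_inj. Qed.

Lemma extend_sub_L' : (forall y, y \in s -> L' y) -> forall y, y \in extend s -> L' y.
Proof.
move=> sL' y; rewrite /extend /Defs.prefix => /mapP[i _ ->].
case: (pad_cases s' i) => [|[[_ //]]].
rewrite mem_rcons in_cons => /orP[/eqP ->|/sL' //]; by case: (least_missingP s).
Qed.

Lemma least_missing_in_extend : least_missing s \in extend s.
Proof.
rewrite -(cat_take_drop (size s') (extend s)) take_extend_rcons.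
by rewrite mem_cat mem_rcons mem_head.
Qed.

Lemma G_extend_sub_L : G (extend s) `<=` L.
Proof. exact: (proj2 (extension_lengthP us')). Qed.

End Extend.

Fixpoint stage k := if k is k'.+1 then extend (stage k') else [::].

Lemma stage_inv k : [/\ uniq (stage k), forall y, y \in stage k -> L' y,
  k <= size (stage k) & forall y, L' y -> y < k -> y \in stage k].
Proof.
elim: k => [|k [us sL' ks cover]] /=; first by split.
have in_ext y : y \in stage k -> y \in extend (stage k).
  by rewrite -{1}(take_extend us) => /mem_take.
split; [exact: uniq_extend | exact: extend_sub_L' |
        exact: leq_ltn_trans ks (size_extend us) |].
move=> y L'y; rewrite ltnS leq_eqVlt => /orP[/eqP eyk|/(cover _ L'y)/in_ext //].
rewrite {}eyk in L'y *; have [/in_ext //|kns] := boolP (k \in stage k).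
suff e : least_missing (stage k) = k by rewrite -{1}e; exact: least_missing_in_extend.
have [L'm mn mmin] := least_missingP (stage k).
apply/eqP; rewrite eqn_leq mmin //= leqNgt; apply/negP => mk.
by rewrite (cover _ L'm mk) in mn.
Qed.

Lemma size_stage_gt i : i < size (stage i.+1).
Proof. by case: (stage_inv i.+1). Qed.

Lemma take_stage k l : k <= l -> take (size (stage k)) (stage l) = stage k.
Proof.
elim: l => [|l IH]; first by rewrite leqn0 => /eqP ->; rewrite take_size.
rewrite leq_eqVlt => /orP[/eqP -> |]; first by rewrite take_size.
rewrite ltnS => /IH kl /=; have [us _ _ _] := stage_inv l.
have sizes : size (stage k) <= size (stage l) by rewrite -kl size_take_min geq_minr.
by rewrite -(take_takel _ sizes) (take_extend us) kl.
Qed.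

Definition adversary i := nth 0 (stage i.+1) i.

Lemma adversary_nth k i : i < size (stage k) -> adversary i = nth 0 (stage k) i.
Proof.
move=> ik; rewrite /adversary; have [ki|ik'] := leqP k i.+1.
  by rewrite -(take_stage ki) nth_take.
by rewrite -(take_stage (ltnW ik')) nth_take // size_stage_gt.
Qed.

Lemma adversary_noisy : noisy_enum L' adversary.
Proof.
split.
  move=> i j; have [us _ ks _] := stage_inv (maxn i j).+1.
  have i_k : i < size (stage (maxn i j).+1) by apply: leq_trans ks; rewrite ltnS leq_maxl.
  have j_k : j < size (stage (maxn i j).+1) by apply: leq_trans ks; rewrite ltnS leq_maxr.
  by rewrite (adversary_nth i_k) (adversary_nth j_k) => /eqP; rewrite nth_uniq // => /eqP.
exists L'; split => //; split; first by rewrite setDv; exact: finite_set0.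
split.
  move=> y L'y; have [_ _ _ cover] := stage_inv y.+1.
  have iy : index y (stage y.+1) < size (stage y.+1) by rewrite index_mem; apply: cover.
  by exists (index y (stage y.+1)); rewrite (adversary_nth iy) nth_index // -index_mem.
apply: (@sub_finite_set _ _ set0); last exact: finite_set0.
move=> _ [[i <-]]; apply; have [_ sL' _ _] := stage_inv i.+1.
by apply: sL'; rewrite mem_nth // size_stage_gt.
Qed.

Lemma adversary_fools_G N : exists2 n, N <= n & G (sample adversary n.+1) `<=` L.
Proof.
have N_lt := size_stage_gt N; have pos := leq_ltn_trans (leq0n N) N_lt.
exists (size (stage N.+1)).-1; first by rewrite -ltnS prednK.
rewrite prednK // (@sample_seq (stage N.+1)) => [|i /adversary_nth //].
by have [us _ _ _] := stage_inv N; exact: G_extend_sub_L.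
Qed.

Lemma limn_einf_adversary_le (R : realType) :
  (limn_einf (fun n => @mu_low R (G (sample adversary n.+1)) L') <= mu_low L L')%E.
Proof.
apply: limn_einf_le_often => N; have [n Nn GL] := adversary_fools_G N.
by exists n => //; apply: (mu_low_le_eventually _ (m := 0) infL') => y _ /GL.
Qed.

End Adversary.
Definition guess_index j := logn 2 j.+1.

Lemma guess_index_hits k b : exists2 z, guess_index z = k & b <= z.
Proof.
have pos : 0 < 2 ^ k * b.*2.+1 by rewrite muln_gt0 expn_gt0.
exists (2 ^ k * b.*2.+1).-1.
  rewrite /guess_index prednK // lognM ?expn_gt0 // pfactorK // logn_coprime ?addn0 //.
  by rewrite coprime2n /= odd_double.
rewrite -ltnS prednK //; apply: (@leq_trans b.*2.+1).
  by rewrite ltnS -addnn leq_addr.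
by rewrite leq_pmull // expn_gt0.
Qed.

Section Generator.
Variable f : nat -> set nat.

Definition candidate j := [set y | f (guess_index j) y /\ j <= y].

Definition consistent (s : seq nat) j := forall y, y \in s -> j <= y -> f (guess_index j) y.

Definition critical s p :=
  consistent s p /\ forall q, q < p -> consistent s q -> candidate p `<=` candidate q.

Definition chosen s p := [/\ p <= size s, critical s p &
  forall q, q <= size s -> critical s q -> q <= p].

Definition gen (s : seq nat) := [set y | exists p, chosen s p /\ candidate p y /\ y \notin s].

Lemma gen_avoids_sample : set_generator gen.
Proof. by move=> s y [p [_ []]]. Qed.

Lemma consistent_sample_antitone x n n' q :
  n <= n' -> consistent (sample x n') q -> consistent (sample x n) q.
Proof. by move=> nn' cq y /(sample_subset nn'); exact: cq. Qed.

Lemma chosen_unique s p p' : chosen s p -> chosen s p' -> p = p'.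
Proof. by case=> ps cp pmax [p's cp' pmax']; apply/eqP; rewrite eqn_leq pmax ?pmax'. Qed.

Lemma chosen_exists s z : critical s z -> z <= size s -> exists p, chosen s p.
Proof.
move=> cz zs; pose P p := `[< p <= size s /\ critical s p >].
have ex : exists p, P p by exists z; apply/asboolP.
have ub p : P p -> p <= size s by move/asboolP => [].
case: (ex_maxnP ex ub) => p /asboolP[ps cp] pmax; exists p; split => // q qs cq.
by apply: pmax; apply/asboolP.
Qed.

Lemma chosen_candidate_sub s z p : critical s z -> z <= size s -> chosen s p ->
  candidate p `<=` candidate z.
Proof.
move=> cz zs [_ [_ cp] pmax].
have := pmax z zs cz; rewrite leq_eqVlt => /orP[/eqP -> //|zp].
exact: cp z zp (proj1 cz).
Qed.

Section Run.
Variables (K Kh : set nat) (x : nat -> nat) (z : nat).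
Hypotheses (fz : f (guess_index z) = K) (Kh_sub : Kh `<=` K).
Hypothesis Kh_enum : forall y, Kh y -> exists i, x i = y.
Hypothesis omissions_lt : forall y, K y -> ~ Kh y -> y < z.
Hypothesis noise_lt : forall i, ~ Kh (x i) -> x i < z.

Lemma consistent_target n : consistent (sample x n) z.
Proof.
move=> _ /mapP[i _ ->] zx; rewrite fz; apply: Kh_sub.
by apply: contrapT => /noise_lt; rewrite ltnNge zx.
Qed.

Lemma target_sub_candidate q : q < z -> (forall n, consistent (sample x n) q) ->
  candidate z `<=` candidate q.
Proof.
move=> qz cq y [fy zy]; rewrite fz in fy.
have Khy : Kh y by apply: contrapT => /(omissions_lt fy); rewrite ltnNge zy.
have [i xi] := Kh_enum Khy.
have qy : q <= y by apply: ltnW; exact: leq_trans qz zy.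
by split => //; apply: (cq i.+1) qy; rewrite -xi mem_sample.
Qed.

Lemma eventually_critical_target : exists n1, forall n, n1 <= n -> critical (sample x n) z.
Proof.
have [n1 stable] := @antitone_stabilizes (fun n q => consistent (sample x n) q)
  (@consistent_sample_antitone x) z.
exists n1 => n n1n; split; first exact: consistent_target.
by move=> q qz cq; apply: target_sub_candidate => //; exact: stable n1n q qz cq.
Qed.

End Run.

Variables (R : realType) (c : R) (Lc : set (set nat)).
Hypotheses (f_in : forall i, Lc (f i)) (f_onto : Lc `<=` range f).
Hypothesis hlang : forall L, Lc L -> infinite_set L.
Hypothesis hcond : forall L L', Lc L -> Lc L' -> finite_set (L `\` L') ->
  (c%:E <= @mu_low R L L')%E.

Lemma mu_low_gen_ge K s p : Lc K -> chosen s p -> candidate p `<=` K ->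
  (c%:E <= @mu_low R (gen s) K)%E.
Proof.
move=> LcK chp pK; apply: (@le_trans _ _ (@mu_low R (f (guess_index p)) K)).
  apply: hcond => //; apply: (@bounded_nat_finite _ p) => y [fy nKy].
  by rewrite ltnNge; apply/negP => py; apply: nKy; apply: pK.
apply: (mu_low_le_eventually _ (m := maxn p (\max_(y <- s) y).+1) (hlang LcK)).
move=> y; rewrite geq_max => /andP[py sy] fy; exists p; split => //; split => //.
exact: bigmax_lt_notin.
Qed.

Lemma gen_correct K x : Lc K -> noisy_enum K x ->
  (exists N, forall n, N <= n -> gen (sample x n) `<=` K) /\
  (c%:E <= limn_einf (fun n => @mu_low R (gen (sample x n.+1)) K))%E.
Proof.
move=> LcK [_ [Kh [Kh_sub [fin_omit [Kh_enum fin_noise]]]]].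
have [k _ fk] := f_onto LcK.
have [b_omit omit_lt] := finite_nat_bounded fin_omit.
have [b_noise noise_lt] := finite_nat_bounded fin_noise.
have [z zk] := guess_index_hits k (maxn b_omit b_noise).
rewrite geq_max => /andP[omit_z noise_z].
have fz : f (guess_index z) = K by rewrite zk.
have [n1 crit] := eventually_critical_target fz Kh_sub Kh_enum
  (fun y Ky nKhy => leq_trans (omit_lt y (conj Ky nKhy)) omit_z)
  (fun i nKhx => leq_trans (noise_lt _ (conj (ex_intro _ i erefl) nKhx)) noise_z).
have late_chosen n : maxn n1 z <= n ->
    exists p, chosen (sample x n) p /\ candidate p `<=` K.
  rewrite geq_max => /andP[n1n zn].
  have zs : z <= size (sample x n) by rewrite size_sample.
  have [p chp] := chosen_exists (crit n n1n) zs; exists p; split => //.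
  by move=> y /(chosen_candidate_sub (crit n n1n) zs chp)[]; rewrite fz.
split.
  exists (maxn n1 z) => n Nn y [p [chp [py _]]].
  have [p' [chp' p'K]] := late_chosen n Nn.
  by apply: p'K; rewrite -(chosen_unique chp chp').
apply: limn_einf_ge_eventually; exists (maxn n1 z) => n Nn.
have [p [chp pK]] := late_chosen n.+1 (leqW Nn).
exact: mu_low_gen_ge LcK chp pK.
Qed.

End Generator.

Local Open Scope ring_scope.

Theorem theorem6p5 (R : realType) (c : R) (Lc : set (set nat))
  (hc : 0 < c) (hcount : countable Lc)
  (hlang : forall L, Lc L -> infinite_set L) :
  generable_low_density_noisy c Lc <->
  (forall L L', Lc L -> Lc L' -> finite_set (L `\` L') ->
     (c%:E <= @mu_low R L L')%E).
Proof.
split.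
  move=> [G [_ G_ok]] L L' LcL LcL' finLL'.
  have infL := hlang L LcL; have infL' := hlang L' LcL'.
  have G_sub_L x : noisy_enum L x -> exists N, forall n, (N <= n)%N -> G (sample x n) `<=` L.
    by move=> /(G_ok L LcL)[].
  have [_ c_le] := G_ok L' LcL' _ (adversary_noisy infL infL' finLL' G_sub_L).
  exact: le_trans c_le (limn_einf_adversary_le infL infL' finLL' G_sub_L R).
move=> hcond; have [[L0 LcL0]|noL] := pselect (exists L, Lc L); last first.
  by exists (fun _ => set0); split => // K LcK; exfalso; apply: noL; exists K.
have [f [f_in f_onto]] := countable_enumeration hcount LcL0.
exists (gen f); split; first exact: gen_avoids_sample.
by move=> K LcK x /(gen_correct f_in f_onto hlang hcond LcK).
Qed.
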